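(* Assume Cramér's conjecture. Then for every positive integer $m$ there exists $n_0$ such that every integer $n\ge n_0$ having exactly $m$ distinct prime factors satisfies Condition 1.
   Context: Let $p_i$ denote the $i$-th prime. Cramér's conjecture: there exist constants $M$ and $N$ such that whenever $p_i\ge N$, $p_{i+1}-p_i\le M(\log p_i)^2$. A positive integer $n$ satisfies Condition 1 if there exist primes $p$ and $q$ such that for all integers $k$ with $1\le k\le n-1$, $\binom{n}{k}$ is divisible by $p$ or $q$. *)

From mathcomp Require Import all_boot.
From Stdlib Require Import Reals.

Definition consecutive_primes (p q : nat) : Prop :=
  prime p /\ prime q /\ (p < q)%N /\ (forall r : nat, (p < r)%N -> (r < q)%N -> ~~ prime r).

Definition cramer_conjecture : Prop :=
  exists (M : R) (N : nat),
    forall p q : nat, consecutive_primes p q -> (N <= p)%N ->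
      (INR q - INR p <= M * (ln (INR p)) ^ 2)%R.

Definition condition1 (n : nat) : Prop :=
  exists p q : nat, prime p /\ prime q /\
    forall k : nat, (1 <= k)%N -> (k <= n - 1)%N -> (p %| 'C(n, k))%N || (q %| 'C(n, k))%N.

(* Let q^b be the largest prime-power factor of n.  As n has m prime factors,
   n <= (q^b)^m.  C(n,k) is divisible by q when k < q^b or n - k < q^b, and
   by a prime p when k < p and n - k < p <= n; so any prime p with
   n - q^b < p <= n settles every k.  Under Cramér's conjecture the primes
   around n - q^b have gaps at most M (log n)^2 <= M m^2 (log q^b)^2, which
   is below q^b once q^b, hence n, is large. *)
From mathcomp Require Import all_boot.
From Stdlib Require Import Reals.
From mathcomp Require Import zify.
From Stdlib Require Import Lra Psatz.

Set Implicit Arguments.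
Unset Strict Implicit.
Unset Printing Implicit Defensive.

(* Importing Reals rebinds [^] on nat to [Nat.pow]; restore [expn]. *)
Local Notation "a ^ b" := (expn a b) : nat_scope.

Lemma prime_dvd_fact p k : prime p -> (p %| k`!) = (p <= k).
Proof.
move=> pr_p; apply/idP/idP; last by move=> le_pk; rewrite dvdn_fact ?prime_gt0.
elim: k => [|k IHk]; first by rewrite fact0 Euclid_dvd1.
rewrite factS Euclid_dvdM // => /orP[/dvdn_leq-> // | /IHk/leqW //].
Qed.

Lemma prime_dvd_bin_lt_pexp q b n k :
  prime q -> q ^ b %| n -> 0 < k < q ^ b -> q %| 'C(n, k).
Proof.
move=> pr_q qb_n /andP[k_gt0 k_lt]; apply: contraLR k_lt => q_ndvd.
have cop : coprime (q ^ b) 'C(n, k) by rewrite coprimeXl // prime_coprime.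
have : q ^ b %| k * 'C(n, k) by rewrite -(prednK k_gt0) -mul_bin_diag dvdn_mulr.
by rewrite Gauss_dvdl // -leqNgt => /dvdn_leq->.
Qed.

Lemma prime_dvd_bin_gt p n k :
  prime p -> p <= n -> k < p -> n - k < p -> p %| 'C(n, k).
Proof.
move=> pr_p le_pn lt_kp lt_nkp.
have : p %| n`! by rewrite prime_dvd_fact.
rewrite -(bin_fact (_ : k <= n)); last by lia.
by rewrite !Euclid_dvdM // !prime_dvd_fact // leqNgt lt_kp leqNgt lt_nkp !orbF.
Qed.

Lemma condition1_window q b p n :
  prime q -> q ^ b %| n -> prime p -> p <= n < p + q ^ b -> condition1 n.
Proof.
move=> pr_q qb_n pr_p /andP[le_pn lt_n]; exists p, q; do 2!split=> //.
move=> k k_ge1 k_le.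
have [k_lt|k_ge] := ltnP k (q ^ b).
  by rewrite (prime_dvd_bin_lt_pexp pr_q qb_n) ?orbT ?k_ge1.
have [nk_lt|nk_ge] := ltnP (n - k) (q ^ b).
  by rewrite -bin_sub 1?(prime_dvd_bin_lt_pexp pr_q qb_n) ?orbT //; lia.
by rewrite prime_dvd_bin_gt //; lia.
Qed.

Lemma prod_leq_exp_size (I : eqType) (s : seq I) (F : I -> nat) :
  s != [::] -> exists2 i, i \in s & \prod_(j <- s) F j <= F i ^ size s.
Proof.
elim: s => // a [|b s] IHs _.
  by exists a; rewrite ?mem_head // big_seq1 expn1.
have [i i_in le_i] := IHs isT.
have [le_ai|lt_ia] := leqP (F a) (F i).
  by exists i; [rewrite inE i_in orbT | rewrite big_cons expnS leq_mul].
exists a; first exact: mem_head.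
rewrite big_cons expnS leq_mul //.
by rewrite (leq_trans le_i) // leq_exp2r // ltnW.
Qed.

Lemma exists_large_pexp_dvdn n : 0 < size (primes n) ->
  exists q b, [/\ prime q, 0 < b, q ^ b %| n & n <= (q ^ b) ^ size (primes n)].
Proof.
case: n => // n size_gt0.
have decomp_nil : prime_decomp n.+1 != [::].
  by rewrite prime_decompE -size_eq0 size_map -lt0n.
have [[q b] qb_in le_prod] := prod_leq_exp_size (fun f => f.1 ^ f.2) decomp_nil.
have [pr_q b_gt0 qb_n] := mem_prime_decomp qb_in.
exists q, b; split=> //.
rewrite {1}(prod_prime_decomp (ltn0Sn n)) (leq_trans le_prod) //.
by rewrite prime_decompE size_map.
Qed.

Lemma consecutive_primes_around r x : prime r -> r <= x ->
  exists p q, [/\ consecutive_primes p q, r <= p, p <= x & x < q].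
Proof.
move=> pr_r le_rx.
have ex_below : exists i, prime i && (i <= x) by exists r; rewrite pr_r.
have ub_below : forall i, prime i && (i <= x) -> i <= x by move=> i /andP[].
have [p /andP[pr_p le_px] max_p] := ex_maxnP ex_below ub_below.
have ex_above : exists i, prime i && (p < i).
  by have [i lt_pi pr_i] := prime_above p; exists i; rewrite pr_i.
have [q /andP[pr_q lt_pq] min_q] := ex_minnP ex_above.
exists p, q; split.
- do 3!split=> //; move=> i lt_pi lt_iq; apply/negP=> pr_i.
  by have := min_q i; rewrite pr_i lt_pi => /(_ isT); lia.
- by apply: max_p; rewrite pr_r.
- by [].
- rewrite ltnNge; apply/negP=> le_qx.
  by have := max_p q; rewrite pr_q le_qx => /(_ isT); lia.
Qed.

Section RealBounds.
Local Open Scope R_scope.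

Lemma INR_expn a m : INR (a ^ m)%nat = INR a ^ m.
Proof. by elim: m => // m IHm; rewrite expnS -multE mult_INR IHm. Qed.

Lemma ln_nondecreasing x y : 0 < x -> x <= y -> ln x <= ln y.
Proof.
move=> x_gt0; case/Rle_lt_or_eq_dec=> [lt_xy|<-]; last exact: Rle_refl.
exact/Rlt_le/ln_increasing.
Qed.

Lemma ln_ge0 x : 1 <= x -> 0 <= ln x.
Proof. by rewrite -ln_1; apply: ln_nondecreasing; lra. Qed.

Lemma ln_pow4_le x : 1 <= x -> ln x ^ 4 <= 256 * x.
Proof.
move=> x_ge1; set u := ln x / 4.
have u_ge0 : 0 <= u by have := ln_ge0 x_ge1; rewrite /u; lra.
have u_le : u <= exp u by have := exp_ineq1_le u; lra.
have exp_u4 : exp u ^ 4 = x.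
  rewrite -[x in _ = x]exp_ln; last lra.
  have -> : ln x = u + u + u + u by rewrite /u; field.
  by rewrite !exp_plus; ring.
have -> : ln x = 4 * u by rewrite /u; field.
have : u ^ 4 <= x by rewrite -exp_u4; apply: pow_incr; lra.
lra.
Qed.

Lemma ln_sq_le_eventually (C : R) :
  exists x0 : nat, forall x : nat, (x0 <= x)%nat -> C * ln (INR x) ^ 2 <= INR x.
Proof.
have [x0 x0_gt] := INR_unbounded (256 * C ^ 2).
exists x0.+1 => x le_x0x.
have x_gt : INR x0.+1 <= INR x by apply/le_INR/leP.
rewrite S_INR in x_gt; have := pos_INR x0 => x0_ge0.
have ln4 : ln (INR x) ^ 4 <= 256 * INR x by apply: ln_pow4_le; lra.
set l := ln (INR x) in ln4 *; set y := INR x in x_gt ln4 *.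
have : (C * l ^ 2) ^ 2 < y ^ 2.
  have -> : (C * l ^ 2) ^ 2 = C ^ 2 * l ^ 4 by ring.
  have := pow2_ge_0 C; nra.
nra.
Qed.

Lemma ln_INR_le_mul a q m : (0 < a)%nat -> (a <= q ^ m)%nat ->
  0 <= ln (INR a) <= INR m * ln (INR q).
Proof.
move=> a_gt0 le_a.
have a_ge1 : 1 <= INR a by apply: (le_INR 1); apply/leP.
split; first exact: ln_ge0.
have [q0|q_gt0] := posnP q.
  rewrite q0 in le_a; case: m le_a => [le_a1|m]; last by rewrite exp0n; lia.
  have -> : a = 1%nat by lia.
  by rewrite /= ln_1; lra.
rewrite -ln_pow; last exact/lt_0_INR/ltP.
by rewrite -INR_expn; apply: ln_nondecreasing; [lra | apply/le_INR/leP].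
Qed.

End RealBounds.

Lemma cramer_prime_window : cramer_conjecture -> forall m,
  exists Q0, forall Q x, Q0 <= Q -> Q <= x -> x <= Q ^ m ->
    exists p, [/\ prime p, x < p & p <= x + Q].
Proof.
move=> [M [N cramer]] m.
have [Q1 ln_small] := ln_sq_le_eventually (Rabs M * INR m ^ 2).
have [r lt_Nr pr_r] := prime_above N.
exists (maxn Q1 r) => Q x; rewrite geq_max => /andP[le_Q1Q le_rQ] le_Qx le_x.
have [p [q [cons_pq le_rp le_px lt_xq]]] :=
  consecutive_primes_around pr_r (leq_trans le_rQ le_Qx).
have [pr_p [pr_q _]] := cons_pq.
exists q; split=> //.
have gap_pq := cramer p q cons_pq (ltnW (leq_trans lt_Nr le_rp)).
have [ln_p_ge0 ln_p_le] : (0 <= ln (INR p) <= INR m * ln (INR Q))%R.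
  by apply: ln_INR_le_mul; [exact: prime_gt0 pr_p | exact: leq_trans le_x].
have ln_p_sq : (ln (INR p) ^ 2 <= (INR m * ln (INR Q)) ^ 2)%R.
  by apply: pow_incr; lra.
have gap_le_Q : (M * ln (INR p) ^ 2 <= INR Q)%R.
  apply: Rle_trans (ln_small Q le_Q1Q).
  have -> : (Rabs M * INR m ^ 2 * ln (INR Q) ^ 2 =
             Rabs M * (INR m * ln (INR Q)) ^ 2)%R by ring.
  have := Rle_abs M; have := Rabs_pos M; have := pow2_ge_0 (ln (INR p)).
  nra.
have : (INR q <= INR (p + Q))%R by rewrite plus_INR; lra.
move/INR_le/leP; lia.
Qed.

Theorem mainTheorem16 :
  cramer_conjecture ->
  forall m : nat, (0 < m)%N ->
    exists n0 : nat, forall n : nat, (n0 <= n)%N -> size (primes n) = m -> condition1 n.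
Proof.
move=> cramer m m_gt0.
have [Q0 window] := cramer_prime_window cramer m.
exists (Q0.+1 ^ m) => n le_n0n size_n.
have [q [b [pr_q b_gt0 qb_n le_n]]] : exists q b,
    [/\ prime q, 0 < b, q ^ b %| n & n <= (q ^ b) ^ m].
  by rewrite -size_n; apply: exists_large_pexp_dvdn; rewrite size_n.
set Q := q ^ b in qb_n le_n.
have lt_Q0Q : Q0 < Q by rewrite -(leq_exp2r _ _ m_gt0); apply: leq_trans le_n.
have n_gt0 : 0 < n by apply: leq_trans le_n0n; rewrite expn_gt0.
have [Q_eq_n|Q_neq_n] := eqVneq Q n.
  apply: (condition1_window pr_q qb_n pr_q).
  have q_dvd_n : q %| n by apply: dvdn_trans qb_n; rewrite dvdn_exp.
  by have := dvdn_leq n_gt0 q_dvd_n; have := prime_gt0 pr_q; lia.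
have le_2Q : 2 * Q <= n.
  have [[|[|r]] def_n] := dvdnP qb_n; first by rewrite def_n in n_gt0.
    by rewrite def_n mul1n eqxx in Q_neq_n.
  by rewrite def_n leq_mul.
have [|||p [pr_p lt_p le_p]] := window Q (n - Q); [exact: ltnW | lia | lia |].
by apply: (condition1_window pr_q qb_n pr_p); lia.
Qed.
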